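(* Let $C$ be an $E$-linear code of length $2n$. Then: (1) if $C$ is free, $(C^{\perp_{S_L}})^{\perp_{S_L}}=C$; (2) if $C_{Res}=\{0\}$ and $C_{Tor}=\mathbb{F}_2^{2n}$, $(C^{\perp_{S_R}})^{\perp_{S_R}}=C$; (3) $(C^{\perp_S})^{\perp_S}=C$.
   Context: $E=\langle \kappa,\tau \mid 2\kappa=2\tau=0,\ \kappa^2=\kappa,\ \tau^2=\tau,\ \kappa\tau=\kappa,\ \tau\kappa=\tau\rangle$ is the non-unital ring $\{0,\kappa,\tau,\zeta\}$, $\zeta=\kappa+\tau$, with $e\kappa=e\tau=e$, $e\zeta=0$ for all $e\in E$. Every $e\in E$ is uniquely $u\kappa+v\zeta$ ($u,v\in\mathbb{F}_2$); $\pi(u\kappa+v\zeta)=u$, componentwise. An $E$-linear code of length $2n$ is a left $E$-submodule $C\subseteq E^{2n}$; $C_{Res}=\pi(C)$, $C_{Tor}=\{v\in\mathbb{F}_2^{2n}:\zeta v\in C\}$ (componentwise, $0\cdot\zeta=0,1\cdot\zeta=\zeta$); $C$ is free if $C_{Res}=C_{Tor}$. Symplectic inner product: $\langle (u|v),(u'|v')\rangle_s=\sum_i u_iv'_i+\sum_i v_iu'_i$. $C^{\perp_{S_L}}=\{z\in E^{2n}:\langle z,w\rangle_s=0\ \forall w\in C\}$, $C^{\perp_{S_R}}=\{z\in E^{2n}:\langle w,z\rangle_s=0\ \forall w\in C\}$, $C^{\perp_S}=C^{\perp_{S_L}}\cap C^{\perp_{S_R}}$ (all again $E$-linear codes). 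*)

From mathcomp Require Import all_boot.
Set Implicit Arguments. Unset Strict Implicit. Unset Printing Implicit Defensive.

(* The non-unital ring E = {0, kappa, tau, zeta}.  An element u*kappa + v*zeta
   (u, v in F_2) is represented by the pair (u, v). *)
Definition E : finType := (bool * bool)%type.

Definition E0 : E := (false, false).
Definition kappa : E := (true, false).
Definition zeta : E := (false, true).
Definition tau : E := (true, true).

Definition Eadd (a b : E) : E := (addb a.1 b.1, addb a.2 b.2).
(* e * kappa = e * tau = e, e * zeta = e * 0 = 0: multiplication by b
   depends only on pi(b). *)
Definition Emul (a b : E) : E := if b.1 then a else E0.

Definition Epi (a : E) : bool := a.1.

Lemma E_relations :
  Eadd kappa kappa = E0 /\ Eadd tau tau = E0 /\ Emul kappa kappa = kappa /\
  Emul tau tau = tau /\ Emul kappa tau = kappa /\ Emul tau kappa = tau /\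
  Eadd kappa tau = zeta.
Proof. by do !split. Qed.

(* Words of length 2n, written (u | v) with u on indices lshift, v on rshift. *)
Definition Ewords (n : nat) : finType := {ffun 'I_(n + n) -> E}.
Definition Fwords (n : nat) : finType := {ffun 'I_(n + n) -> bool}.

Definition Ezero_word n : Ewords n := [ffun => E0].
Definition Eadd_word n (x y : Ewords n) : Ewords n := [ffun i => Eadd (x i) (y i)].
Definition Escale n (e : E) (x : Ewords n) : Ewords n := [ffun i => Emul e (x i)].

Definition E_linear n (C : {set Ewords n}) : Prop :=
  [/\ Ezero_word n \in C,
      (forall x y, x \in C -> y \in C -> Eadd_word x y \in C) &
      (forall e x, x \in C -> Escale e x \in C)].

Definition C_Res n (C : {set Ewords n}) : {set Fwords n} :=
  [set ([ffun i => Epi (c i)] : Fwords n) | c : Ewords n in C].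

Definition zeta_word n (v : Fwords n) : Ewords n :=
  [ffun i => if v i then zeta else E0].

Definition C_Tor n (C : {set Ewords n}) : {set Fwords n} :=
  [set v | zeta_word v \in C].

Definition free_code n (C : {set Ewords n}) : Prop := C_Res C = C_Tor C.

Definition symp n (x y : Ewords n) : E :=
  \big[Eadd/E0]_(i < n)
     Eadd (Emul (x (lshift n i)) (y (rshift n i)))
          (Emul (x (rshift n i)) (y (lshift n i))).

Definition perpSL n (C : {set Ewords n}) : {set Ewords n} :=
  [set z | [forall w in C, symp z w == E0]].
Definition perpSR n (C : {set Ewords n}) : {set Ewords n} :=
  [set z | [forall w in C, symp w z == E0]].
Definition perpS n (C : {set Ewords n}) : {set Ewords n} :=
  perpSL C :&: perpSR C.

(* Write every word over E as u kappa + v zeta with u, v in F_2^2n.  Since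
   e * b = pi(b) e, the symplectic product of two such words is
   <u, u'> kappa + <v, u'> zeta for the binary symplectic form <_, _>.  An
   E-linear code is C = {u kappa + v zeta | u in C_Res, v in C_Tor} with
   C_Res a subspace of C_Tor, and its three duals have the same shape:
   (C_Res^perp, C_Res^perp) on the left, (C_Tor^perp, F_2^2n) on the right and
   (C_Tor^perp, C_Res^perp) on both sides.  Each claim thus reduces to
   D^perp^perp = D for binary subspaces D, which holds because the form has
   an invertible Gram matrix: D lies in D^perp^perp and
   dim D^perp = 2n - dim D. *)

From mathcomp Require Import all_boot all_algebra.
Set Implicit Arguments. Unset Strict Implicit. Unset Printing Implicit Defensive.
Import GRing.Theory.
Local Open Scope ring_scope.

Section DoubleOrthogonal.
Variables (R : fieldType) (m : nat) (eps : bool) (theta : {rmorphism R -> R}).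
Variable M : 'M[R]_m.
Hypotheses (thetaK : involutive theta) (M_sesqui : M \is (eps, theta).-sesqui)
           (M_unit : M \in unitmx).

Lemma mxrank_ortho k (B : 'M_(k, m)) : \rank (ortho theta M B) = (m - \rank B)%N.
Proof.
rewrite /ortho /orthomx mxrank_ker eqmxMfull ?row_full_unit //.
by rewrite mxrank_map mxrank_tr.
Qed.

Lemma orthoK k (B : 'M_(k, m)) : (ortho theta M (ortho theta M B) :=: B)%MS.
Proof.
have sB := normal_mx_ortho thetaK M_sesqui B.
apply/eqmxP; rewrite -(mxrank_leqif_sup sB).2 sB andbT.
by rewrite !mxrank_ortho subKn ?rank_leq_col.
Qed.
End DoubleOrthogonal.

Lemma F2_natr_neq0 (a : 'F_2) : a = (a != 0)%:R.
Proof. by case: a => [[|[|k]] //= ?]; apply/val_inj. Qed.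

Lemma F2_natr_addb (a b : bool) : (a (+) b)%:R = a%:R + b%:R :> 'F_2.
Proof. by case: a; case: b => //=; apply/val_inj. Qed.

Section SymplecticF2.
Variable n : nat.
Implicit Types (x y : Fwords n) (S : {set Fwords n}).

Definition Fzero_word : Fwords n := [ffun => false].
Definition Fadd_word x y : Fwords n := [ffun i => x i (+) y i].

Definition F2_linear S :=
  Fzero_word \in S /\ forall x y, x \in S -> y \in S -> Fadd_word x y \in S.

Definition sform x y : bool :=
  \big[addb/false]_(i < n)
     ((x (lshift n i) && y (rshift n i)) (+) (x (rshift n i) && y (lshift n i))).

Definition sdual S : {set Fwords n} := [set x | [forall y in S, ~~ sform x y]].

Definition sympmx : 'M['F_2]_(n + n) := block_mx 0 1%:M 1%:M 0.

Definition F2row x : 'rV['F_2]_(n + n) := \row_i (x i)%:R.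
Definition F2word (v : 'rV['F_2]_(n + n)) : Fwords n := [ffun i => v 0 i != 0].

Lemma F2rowK : cancel F2row F2word.
Proof.
by move=> x; apply/ffunP => i; rewrite !ffunE mxE; case: (x i); rewrite ?oner_neq0.
Qed.

Lemma F2wordK : cancel F2word F2row.
Proof. by move=> v; apply/rowP => i; rewrite !mxE ffunE -F2_natr_neq0. Qed.

Lemma F2row0 : F2row Fzero_word = 0.
Proof. by apply/rowP => i; rewrite !mxE ffunE. Qed.

Lemma F2rowD x y : F2row (Fadd_word x y) = F2row x + F2row y.
Proof. by apply/rowP => i; rewrite !mxE ffunE F2_natr_addb. Qed.

Lemma sympmx_sesqui : sympmx \is (false, idfun : {rmorphism _ -> _}).-sesqui.
Proof.
rewrite sesquiE expr0 scale1r map_mx_id //.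
by rewrite /sympmx tr_block_mx !trmx0 trmx1.
Qed.

Lemma sympmx_unit : sympmx \in unitmx.
Proof.
have /mulmx1_unit[] // : sympmx *m sympmx = 1%:M.
by rewrite mulmx_block !mulmx0 !mul0mx !mulmx1 !addr0 !add0r scalar_mx_block.
Qed.

Lemma form_sympmx x y : form idfun sympmx (F2row x) (F2row y) = (sform x y)%:R.
Proof.
rewrite /form map_mx_id // -[F2row x]hsubmxK -[F2row y]hsubmxK.
rewrite mul_row_block !mulmx0 !mulmx1 add0r addr0 tr_row_mx mul_row_col.
rewrite !mxE.
rewrite (big_morph (fun b : bool => b%:R : 'F_2) F2_natr_addb (id2 := false) (erefl 0)).
rewrite -big_split; apply: eq_bigr => i _ /=.
by rewrite F2_natr_addb addrC !mxE -!natrM !mulnb.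
Qed.

Definition mxwords k (A : 'M['F_2]_(k, n + n)) : {set Fwords n} :=
  [set x | (F2row x <= A)%MS].

Definition words_mx S : 'M['F_2]_(#|S|, n + n) :=
  \matrix_(k < #|S|) F2row (enum_val k).

Lemma words_mxK S : F2_linear S -> mxwords (words_mx S) = S.
Proof.
case=> S0 SD; apply/setP => x; rewrite inE; apply/idP/idP => [|xS]; last first.
  by have := row_sub (enum_rank_in xS x) (words_mx S); rewrite rowK enum_rankK_in.
case/submxP => u /(canRL F2rowK) ->; rewrite mulmx_sum_row.
apply: (big_ind (fun v => F2word v \in S)) => [|v w|k _].
- by rewrite -F2row0 F2rowK.
- by rewrite -(F2wordK v) -(F2wordK w) -F2rowD !F2rowK; apply: SD.
rewrite rowK [u 0 k]F2_natr_neq0; case: (u 0 k != 0).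
  by rewrite scale1r F2rowK enum_valP.
by rewrite scale0r -F2row0 F2rowK.
Qed.

Lemma sdual_mxwords k (A : 'M_(k, n + n)) :
  sdual (mxwords A) = mxwords (ortho idfun sympmx A).
Proof.
apply/setP => x; rewrite !inE; apply/forall_inP/normalP => [xA u v ux vA | xA y].
  apply: submx_trans ux _; rewrite normalE -(F2wordK v) form_sympmx.
  by rewrite (negbTE (xA _ _)) // inE F2wordK.
rewrite inE => /(xA _ _ (submx_refl _)); rewrite normalE form_sympmx.
by case: sform; rewrite ?oner_eq0.
Qed.

Lemma sformC x y : sform x y = sform y x.
Proof. by apply: eq_bigr => i _; rewrite addbC (andbC (x _)) (andbC (x _)). Qed.

Lemma sform0l y : sform Fzero_word y = false.
Proof. by rewrite /sform big1 // => i _; rewrite !ffunE. Qed.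

Lemma Fzero_sdual S : Fzero_word \in sdual S.
Proof. by rewrite inE; apply/forall_inP => y _; rewrite sform0l. Qed.

Lemma sdualS (A B : {set Fwords n}) : A \subset B -> sdual B \subset sdual A.
Proof.
move=> /subsetP sAB; apply/subsetP => x; rewrite !inE => /forall_inP xB.
by apply/forall_inP => y /sAB /xB.
Qed.

Lemma sdual_Fzero : sdual [set Fzero_word] = setT.
Proof.
apply/setP => x; rewrite !inE; apply/forall_inP => y; rewrite inE => /eqP ->.
by rewrite sformC sform0l.
Qed.

Lemma sdualK S : F2_linear S -> sdual (sdual S) = S.
Proof.
move=> SL; rewrite -{1}(words_mxK SL) !sdual_mxwords.
rewrite -[RHS](words_mxK SL); apply/setP => x; rewrite !inE.
by rewrite (orthoK _ sympmx_sesqui) ?sympmx_unit.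
Qed.
End SymplecticF2.

Local Close Scope ring_scope.

Section Ecodes.
Variable n : nat.
Implicit Types (A B : {set Fwords n}) (C : {set Ewords n}) (z : Ewords n).

Definition kappa_coord z : Fwords n := [ffun i => Epi (z i)].
Definition zeta_coord z : Fwords n := [ffun i => (z i).2].
Definition Eword (a b : Fwords n) : Ewords n := [ffun i => (a i, b i)].

Definition Ecode A B : {set Ewords n} :=
  [set z | (kappa_coord z \in A) && (zeta_coord z \in B)].

Lemma kappa_coord_Eword a b : kappa_coord (Eword a b) = a.
Proof. by apply/ffunP => i; rewrite !ffunE. Qed.

Lemma zeta_coord_Eword a b : zeta_coord (Eword a b) = b.
Proof. by apply/ffunP => i; rewrite !ffunE. Qed.

Lemma Eword_in_Ecode A B a b : (Eword a b \in Ecode A B) = (a \in A) && (b \in B).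
Proof. by rewrite inE kappa_coord_Eword zeta_coord_Eword. Qed.

Lemma Emul_pair (a b : E) : Emul a b = (a.1 && Epi b, a.2 && Epi b).
Proof. by case: a b => [? ?] [[] ?]; rewrite /= ?andbT ?andbF. Qed.

Lemma symp_coord x y : symp x y =
  (sform (kappa_coord x) (kappa_coord y), sform (zeta_coord x) (kappa_coord y)).
Proof.
rewrite [LHS]surjective_pairing /symp.
rewrite (big_morph fst (id1 := false) (op1 := addb)) //.
rewrite (big_morph snd (id1 := false) (op1 := addb)) //.
by congr pair; apply: eq_bigr => i _; rewrite !Emul_pair !ffunE.
Qed.

Lemma symp_eq0 x y : (symp x y == E0) =
  ~~ sform (kappa_coord x) (kappa_coord y) && ~~ sform (zeta_coord x) (kappa_coord y).
Proof. by rewrite symp_coord; case: sform; case: sform. Qed.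

Lemma EcodeI A B A' B' : Ecode A B :&: Ecode A' B' = Ecode (A :&: A') (B :&: B').
Proof. by apply/setP => z; rewrite !inE andbACA. Qed.

Lemma perpSL_Ecode A B : Fzero_word n \in B ->
  perpSL (Ecode A B) = Ecode (sdual A) (sdual A).
Proof.
move=> B0; apply/setP => z; rewrite !inE.
apply/forall_inP/andP => [zAB | [zA1 zA2] w].
  have zA a : a \in A -> ~~ sform (kappa_coord z) a && ~~ sform (zeta_coord z) a.
    move=> aA; have := zAB (Eword a (Fzero_word n)).
    by rewrite Eword_in_Ecode aA B0 symp_eq0 kappa_coord_Eword; apply.
  by split; apply/forall_inP => a /zA /andP[].
by rewrite inE symp_eq0 => /andP[wA _]; rewrite (forall_inP zA1) ?(forall_inP zA2).
Qed.

Lemma perpSR_Ecode A B : Fzero_word n \in A -> A \subset B ->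
  perpSR (Ecode A B) = Ecode (sdual B) setT.
Proof.
move=> A0 sAB; have B0 := subsetP sAB _ A0.
apply/setP => z; rewrite !inE andbT.
apply/forall_inP/forall_inP => [zAB b bB | zB w].
  have := zAB (Eword (Fzero_word n) b); rewrite Eword_in_Ecode A0 bB symp_eq0.
  by rewrite zeta_coord_Eword [sform b _]sformC => /(_ isT)/andP[].
rewrite inE symp_eq0 => /andP[wA wB].
by rewrite !(sformC _ (kappa_coord z)) !zB // (subsetP sAB).
Qed.

Lemma perpS_Ecode A B : Fzero_word n \in A -> A \subset B ->
  perpS (Ecode A B) = Ecode (sdual B) (sdual A).
Proof.
move=> A0 sAB; rewrite /perpS perpSL_Ecode ?(subsetP sAB) // perpSR_Ecode //.
by rewrite EcodeI setIT (setIidPr (sdualS sAB)).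
Qed.

Section LinearCode.
Variable C : {set Ewords n}.
Hypothesis C_lin : E_linear C.

Lemma Ecode_Res_Tor : C = Ecode (C_Res C) (C_Tor C).
Proof.
case: C_lin => C0 CD CS; apply/setP => z; rewrite !inE.
apply/idP/andP => [zC | []].
  split; first exact: imset_f.
  have -> : zeta_word (zeta_coord z) = Eadd_word z (Escale kappa z).
    by apply/ffunP => i; rewrite !ffunE /Emul; case: (z i) => [[] []].
  by apply: CD => //; apply: CS.
case/imsetP => c cC zc zT.
have -> : z = Eadd_word (Escale kappa c) (zeta_word (zeta_coord z)).
  apply/ffunP => i; move/ffunP/(_ i): zc; rewrite !ffunE /Emul /Epi.
  by case: (z i) => [[] []]; case: (c i) => [[] []].
by apply: CD => //; apply: CS.
Qed.

Lemma C_Res_F2_linear : F2_linear (C_Res C).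
Proof.
case: C_lin => C0 CD _; split.
  by apply/imsetP; exists (Ezero_word n) => //; apply/ffunP => i; rewrite !ffunE.
move=> _ _ /imsetP[c cC ->] /imsetP[d dC ->]; apply/imsetP; exists (Eadd_word c d).
  exact: CD.
by apply/ffunP => i; rewrite !ffunE.
Qed.

Lemma C_Tor_F2_linear : F2_linear (C_Tor C).
Proof.
case: C_lin => C0 CD _; split.
  by rewrite inE; congr (_ \in C): C0; apply/ffunP => i; rewrite !ffunE.
move=> x y; rewrite !inE => xT yT.
suff -> : zeta_word (Fadd_word x y) = Eadd_word (zeta_word x) (zeta_word y) by apply: CD.
by apply/ffunP => i; rewrite !ffunE; case: (x i); case: (y i).
Qed.

Lemma C_Res_sub_Tor : C_Res C \subset C_Tor C.
Proof.
case: C_lin => _ _ CS; apply/subsetP => _ /imsetP[c cC ->]; rewrite inE.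
suff -> : zeta_word (kappa_coord c) = Escale zeta c by apply: CS.
by apply/ffunP => i; rewrite !ffunE /Emul /Epi; case: (c i) => [[] ?].
Qed.
End LinearCode.
End Ecodes.

Theorem mainTheorem9 (n : nat) (C : {set Ewords n}) :
  E_linear C ->
  [/\ (free_code C -> perpSL (perpSL C) = C),
      (C_Res C = [set [ffun => false]] -> C_Tor C = setT ->
         perpSR (perpSR C) = C)
    & perpS (perpS C) = C].
Proof.
move=> C_lin; have Cdec := Ecode_Res_Tor C_lin.
have Rlin := C_Res_F2_linear C_lin; have Tlin := C_Tor_F2_linear C_lin.
have sRT := C_Res_sub_Tor C_lin; have R0 := Rlin.1.
split.
- rewrite /free_code => RT; rewrite Cdec -RT.
  by rewrite !perpSL_Ecode ?Fzero_sdual // sdualK.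
- move=> R_0 T_all; suff perpSR_C : perpSR C = C by rewrite !perpSR_C.
  have dualT : sdual (C_Tor C) = C_Res C.
    by rewrite T_all -(sdual_Fzero n) -R_0 sdualK.
  by rewrite {1}Cdec perpSR_Ecode // dualT -T_all -Cdec.
- rewrite Cdec perpS_Ecode // perpS_Ecode ?Fzero_sdual ?sdualS //.
  by rewrite !sdualK.
Qed.
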